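(* Consider the first-order system, for the state $\mathbb W=(\alpha_1,\alpha_1\rho_1,\alpha_2\rho_2,\alpha_1\rho_1u_1,\alpha_2\rho_2u_2,\alpha_1\rho_1s_1,\alpha_2\rho_2s_2,\alpha_1\rho_1\mathcal T_1,\alpha_2\rho_2\mathcal T_2)\in\Omega_{\mathbb W}$, $$\partial_t\mathbb W+\partial_x\mathbf g(\mathbb W)+\mathbf d(\mathbb W)\partial_x\mathbb W=0,$$ with $\mathbf g(\mathbb W)=(0,\alpha_1\rho_1u_1,\alpha_2\rho_2u_2,\alpha_1\rho_1u_1^2+\alpha_1\pi_1,\alpha_2\rho_2u_2^2+\alpha_2\pi_2,\alpha_1\rho_1s_1u_1,\alpha_2\rho_2s_2u_2,\alpha_1\rho_1\mathcal T_1u_1,\alpha_2\rho_2\mathcal T_2u_2)^T$ and $\mathbf d(\mathbb W)\partial_x\mathbb W=(u_2,0,0,-\pi_1,\pi_1,0,0,0,0)^T\partial_x\alpha_1$. For every $\mathbb W\in\Omega_{\mathbb W}$, the matrix $\mathbf g'(\mathbb W)+\mathbf d(\mathbb W)$ has the real eigenvalues $u_2$ (multiplicity 3), $u_1$ (multiplicity 2), $u_1\pm a_1\tau_1$, $u_2\pm a_2\tau_2$; all associated characteristic fields are linearly degenerate; and the right eigenvectors are linearly independent (span $\mathbb R^9$) if and only if $\alpha_1\neq0$, $\alpha_2\neq0$ and $|u_1-u_2|\neq a_1\tau_1$. Moreover every $C^1$ solution with values in $\Omega_{\mathbb W}$ satisfies, for $k=1,2$, $$\partial_t(\alpha_k\rho_k\mathcal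 E_k)+\partial_x(\alpha_k\rho_k\mathcal E_ku_k+\alpha_k\pi_ku_k)-u_2\pi_1\partial_x\alpha_k=0,$$ and hence $\partial_t\big(\sum_{k=1}^2\alpha_k\rho_k\mathcal E_k\big)+\partial_x\big(\sum_{k=1}^2(\alpha_k\rho_k\mathcal E_ku_k+\alpha_k\pi_ku_k)\big)=0$.
   Context: $\alpha_2=1-\alpha_1$, $\rho_k=(\alpha_k\rho_k)/\alpha_k$, $\tau_k=1/\rho_k$, $u_k,s_k,\mathcal T_k$ obtained by dividing the corresponding components by $\alpha_k\rho_k$. $\Omega_{\mathbb W}=\{\mathbb W\in\mathbb R^9:\ 0<\alpha_1<1,\ \alpha_k\rho_k>0,\ \alpha_k\rho_k\mathcal T_k>0,\ k=1,2\}$. $a_1,a_2>0$ are constants. For phase $k$, $e_k(\tau,s)$ is a $C^1$ internal energy and $\mathcal P_k(\tau,s)=-\partial_\tau e_k(\tau,s)$ (assumed $C^1$); $\pi_k=\mathcal P_k(\mathcal T_k,s_k)+a_k^2(\mathcal T_k-\tau_k)$ and $\mathcal E_k=\frac{u_k^2}{2}+e_k(\mathcal T_k,s_k)+\frac{\pi_k^2-\mathcal P_k(\mathcal T_k,s_k)^2}{2a_k^2}$. *)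

From Stdlib Require Import Reals.
Open Scope R_scope.

Fixpoint sumR (n : nat) (f : nat -> R) : R :=
  match n with O => 0 | S n' => sumR n' f + f n' end.

Definition minor (j : nat) (M : nat -> nat -> R) : nat -> nat -> R :=
  fun i k => M (S i) (if Nat.ltb k j then k else S k).

Fixpoint det (n : nat) (M : nat -> nat -> R) : R :=
  match n with
  | O => 1
  | S n' => sumR n (fun j => (-1) ^ j * M O j * det n' (minor j M))
  end.

(** State W = (a1, a1r1, a2r2, a1r1u1, a2r2u2, a1r1s1, a2r2s2, a1r1T1, a2r2T2),
    indices 0..8.  Phase index k in {1,2}. *)
Definition alpha (k : nat) (W : nat -> R) : R :=
  if Nat.eqb k 1 then W 0%nat else 1 - W 0%nat.
Definition arho (k : nat) (W : nat -> R) : R := W k.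
Definition rho (k : nat) (W : nat -> R) : R := arho k W / alpha k W.
Definition tau (k : nat) (W : nat -> R) : R := / rho k W.
Definition u (k : nat) (W : nat -> R) : R := W (k + 2)%nat / arho k W.
Definition s (k : nat) (W : nat -> R) : R := W (k + 4)%nat / arho k W.
Definition TT (k : nat) (W : nat -> R) : R := W (k + 6)%nat / arho k W.

Definition pi (P : R -> R -> R) (a : R) (k : nat) (W : nat -> R) : R :=
  P (TT k W) (s k W) + a ^ 2 * (TT k W - tau k W).

Definition Energy (e P : R -> R -> R) (a : R) (k : nat) (W : nat -> R) : R :=
  (u k W) ^ 2 / 2 + e (TT k W) (s k W)
  + ((pi P a k W) ^ 2 - (P (TT k W) (s k W)) ^ 2) / (2 * a ^ 2).

Definition OmegaW (W : nat -> R) : Prop :=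
  0 < W 0%nat < 1 /\ 0 < W 1%nat /\ 0 < W 2%nat /\ 0 < W 7%nat /\ 0 < W 8%nat.

Definition gflux (P1 P2 : R -> R -> R) (a1 a2 : R) (W : nat -> R) (i : nat) : R :=
  match i with
  | 1%nat => arho 1 W * u 1 W
  | 2%nat => arho 2 W * u 2 W
  | 3%nat => arho 1 W * (u 1 W) ^ 2 + alpha 1 W * pi P1 a1 1 W
  | 4%nat => arho 2 W * (u 2 W) ^ 2 + alpha 2 W * pi P2 a2 2 W
  | 5%nat => arho 1 W * s 1 W * u 1 W
  | 6%nat => arho 2 W * s 2 W * u 2 W
  | 7%nat => arho 1 W * TT 1 W * u 1 W
  | 8%nat => arho 2 W * TT 2 W * u 2 W
  | _ => 0
  end.

Definition dmat (P1 : R -> R -> R) (a1 : R) (W : nat -> R) (i j : nat) : R :=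
  if Nat.eqb j 0 then
    match i with
    | 0%nat => u 2 W
    | 3%nat => - pi P1 a1 1 W
    | 4%nat => pi P1 a1 1 W
    | _ => 0
    end
  else 0.

Definition update (W : nat -> R) (j : nat) (h : R) : nat -> R :=
  fun k => if Nat.eqb k j then W k + h else W k.

Definition is_jacobian (G : (nat -> R) -> nat -> R) (W : nat -> R)
  (J : nat -> nat -> R) : Prop :=
  forall i j, (i < 9)%nat -> (j < 9)%nat ->
    derivable_pt_lim (fun h => G (update W j h) i) 0 (J i j).

Definition matvec (A : nat -> nat -> R) (r : nat -> R) (i : nat) : R :=
  sumR 9 (fun j => A i j * r j).

Definition eigenbasis (A : nat -> nat -> R) : Prop :=
  exists (r : nat -> nat -> R) (mu : nat -> R),
    (forall k i, (k < 9)%nat -> (i < 9)%nat -> matvec A (r k) i = mu k * r k i) /\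
    (forall c : nat -> R,
        (forall i, (i < 9)%nat -> sumR 9 (fun k => c k * r k i) = 0) ->
        forall k, (k < 9)%nat -> c k = 0).

Definition lamfun (a1 a2 : R) (n : nat) (W : nat -> R) : R :=
  match n with
  | 0%nat => u 2 W
  | 1%nat => u 1 W
  | 2%nat => u 1 W + a1 * tau 1 W
  | 3%nat => u 1 W - a1 * tau 1 W
  | 4%nat => u 2 W + a2 * tau 2 W
  | _ => u 2 W - a2 * tau 2 W
  end.

Definition cont2_at (f : R -> R -> R) (x y : R) : Prop :=
  forall eps, 0 < eps -> exists delta, 0 < delta /\
    forall x' y', Rabs (x' - x) < delta -> Rabs (y' - y) < delta ->
      Rabs (f x' y' - f x y) < eps.

Definition open2 (U : R -> R -> Prop) : Prop :=
  forall x y, U x y -> exists delta, 0 < delta /\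
    forall x' y', Rabs (x' - x) < delta -> Rabs (y' - y) < delta -> U x' y'.

Definition C1_on (D : R -> R -> Prop) (f : R -> R -> R) : Prop :=
  exists f1 f2 : R -> R -> R,
    forall x y, D x y ->
      derivable_pt_lim (fun z => f z y) x (f1 x y) /\
      derivable_pt_lim (fun z => f x z) y (f2 x y) /\
      cont2_at f1 x y /\ cont2_at f2 x y.

Definition tau_pos : R -> R -> Prop := fun t _ => 0 < t.

Definition eta (e P : R -> R -> R) (a : R) (k : nat) (W : nat -> R) : R :=
  alpha k W * rho k W * Energy e P a k W.
Definition eflux (e P : R -> R -> R) (a : R) (k : nat) (W : nat -> R) : R :=
  alpha k W * rho k W * Energy e P a k W * u k W + alpha k W * pi P a k W * u k W.

Definition dalpha (k : nat) (w : R) : R := if Nat.eqb k 1 then w else - w.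

(** In [x I - (g'(W) + d(W))] the row of [alpha1] is reduced to its diagonal entry
    [x - u2], and the remaining rows split into one 4x4 block per phase whose
    determinant is [(x - u_k)^2 ((x - u_k)^2 - (a_k tau_k)^2)].  Along an eigenvector
    the corresponding eigenvalue is constant, because the eigenvector equations force
    the components that move it to vanish.  Eigenvectors are written explicitly in the
    primitive variables [(alpha1, tau_k, u_k, s_k, T_k)] as long as
    [(u1 - u2)^2 <> (a1 tau1)^2]; at resonance every eigenvector has a vanishing
    [alpha1]-component, so they cannot span [R^9].
    Each phase satisfies the energy balance of a single relaxation system with an
    interfacial velocity and pressure, which here are [u2] and [pi1]; since [T_k] and
    [s_k] are both transported by [u_k]. *)

From Stdlib Require Import Reals Lra Lia List.
From Coquelicot Require Import Coquelicot.
From mathcomp Require all_boot all_algebra Rstruct.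
Import ListNotations.
Open Scope R_scope.

Lemma derivable_pt_lim_eq f x l l' :
  derivable_pt_lim f x l -> l = l' -> derivable_pt_lim f x l'.
Proof. intros H <-; exact H. Qed.

Lemma derivable_pt_lim_plus' f g x a b :
  derivable_pt_lim f x a -> derivable_pt_lim g x b ->
  derivable_pt_lim (fun h => f h + g h) x (a + b).
Proof. exact (derivable_pt_lim_plus f g x a b). Qed.

Lemma derivable_pt_lim_minus' f g x a b :
  derivable_pt_lim f x a -> derivable_pt_lim g x b ->
  derivable_pt_lim (fun h => f h - g h) x (a - b).
Proof. exact (derivable_pt_lim_minus f g x a b). Qed.

Lemma derivable_pt_lim_opp' f x a :
  derivable_pt_lim f x a -> derivable_pt_lim (fun h => - f h) x (- a).
Proof. exact (derivable_pt_lim_opp f x a). Qed.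

Lemma derivable_pt_lim_mult' f g x a b :
  derivable_pt_lim f x a -> derivable_pt_lim g x b ->
  derivable_pt_lim (fun h => f h * g h) x (a * g x + f x * b).
Proof.
  intros Hf Hg; eapply derivable_pt_lim_eq; [exact (derivable_pt_lim_mult f g x a b Hf Hg) | ring].
Qed.

Lemma derivable_pt_lim_div' f g x a b : g x <> 0 ->
  derivable_pt_lim f x a -> derivable_pt_lim g x b ->
  derivable_pt_lim (fun h => f h / g h) x ((a * g x - b * f x) / g x ^ 2).
Proof.
  intros Hg0 Hf Hg; eapply derivable_pt_lim_eq;
    [exact (derivable_pt_lim_div f g x a b Hf Hg Hg0) | unfold Rsqr; field; exact Hg0].
Qed.

Lemma derivable_pt_lim_inv' f x a : f x <> 0 ->
  derivable_pt_lim f x a -> derivable_pt_lim (fun h => / f h) x (- a / f x ^ 2).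
Proof.
  intros Hf0 Hf.
  apply (derivable_pt_lim_ext (fun h => 1 / f h)); [intros; unfold Rdiv; ring |].
  eapply derivable_pt_lim_eq;
    [apply (derivable_pt_lim_div' (fun _ => 1)); [exact Hf0 | apply derivable_pt_lim_const | exact Hf]
    | field; exact Hf0].
Qed.

Lemma derivable_pt_lim_pow' f x a n : derivable_pt_lim f x a ->
  derivable_pt_lim (fun h => f h ^ n) x (INR n * f x ^ Nat.pred n * a).
Proof.
  intros Hf; apply (derivable_pt_lim_comp f (fun y => y ^ n)); [exact Hf | apply derivable_pt_lim_pow].
Qed.

(** The hypothesis of the shape [forall g k x g' k', ...] is a chain rule
    [C1_partials_chain] for one of the unknown functions [e_k], [P_k]. *)
Ltac derive_step :=
  first [ apply derivable_pt_lim_const | apply derivable_pt_lim_id | eassumption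
        | apply derivable_pt_lim_div' | apply derivable_pt_lim_inv'
        | apply derivable_pt_lim_minus' | apply derivable_pt_lim_plus'
        | apply derivable_pt_lim_opp' | apply derivable_pt_lim_pow'
        | apply derivable_pt_lim_mult'
        | match goal with H : forall (g k : R -> R) (x g' k' : R), _ |- _ => eapply H end ].

Lemma mvt_abs_bound (f f' : R -> R) (x y K : R) :
  (forall c, Rmin x y <= c <= Rmax x y -> derivable_pt_lim f c (f' c)) ->
  (forall c, Rmin x y <= c <= Rmax x y -> Rabs (f' c) <= K) ->
  Rabs (f y - f x) <= K * Rabs (y - x).
Proof.
  intros Hd Hb.
  destruct (Rtotal_order x y) as [Hlt | [-> | Hgt]].
  - destruct (MVT_cor2 f f' x y Hlt) as [c [-> Hc]].
    { intros c Hc; apply Hd; rewrite Rmin_left, Rmax_right; lra. }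
    rewrite Rabs_mult; apply Rmult_le_compat_r; [apply Rabs_pos |].
    apply Hb; rewrite Rmin_left, Rmax_right; lra.
  - rewrite !Rminus_diag, Rabs_R0; lra.
  - destruct (MVT_cor2 f f' y x Hgt) as [c [Hc1 Hc]].
    { intros c Hc; apply Hd; rewrite Rmin_right, Rmax_left; lra. }
    rewrite <- (Rabs_Ropp (f y - f x)), <- (Rabs_Ropp (y - x)).
    replace (- (f y - f x)) with (f x - f y) by ring.
    replace (- (y - x)) with (x - y) by ring.
    rewrite Hc1, Rabs_mult; apply Rmult_le_compat_r; [apply Rabs_pos |].
    apply Hb; rewrite Rmin_right, Rmax_left; lra.
Qed.

Lemma derivable_pt_lim_approx f y l (eps : R) : 0 < eps ->
  derivable_pt_lim f y l ->
  exists d, 0 < d /\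
    forall v, Rabs (v - y) < d -> Rabs (f v - f y - l * (v - y)) <= eps * Rabs (v - y).
Proof.
  intros Heps Hf; destruct (Hf eps Heps) as [d Hd].
  exists d; split; [apply cond_pos |]; intros v Hv.
  destruct (Req_dec v y) as [-> | Hvy].
  - rewrite !Rminus_diag, Rmult_0_r, Rminus_0_r, Rabs_R0; lra.
  - specialize (Hd (v - y) ltac:(lra) Hv); replace (y + (v - y)) with v in Hd by ring.
    replace (f v - f y - l * (v - y)) with (((f v - f y) / (v - y) - l) * (v - y))
      by (field; lra).
    rewrite Rabs_mult; apply Rmult_le_compat_r; [apply Rabs_pos | lra].
Qed.

Lemma differentiable_pt_lim_of_partials (F F1 F2 : R -> R -> R) x y (d : R) : 0 < d ->
  (forall u v, Rabs (u - x) < d -> Rabs (v - y) < d ->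
     derivable_pt_lim (fun z => F z v) u (F1 u v)) ->
  derivable_pt_lim (fun z => F x z) y (F2 x y) -> cont2_at F1 x y ->
  differentiable_pt_lim F x y (F1 x y) (F2 x y).
Proof.
  intros Hd HF1 HF2 HC eps.
  pose proof (cond_pos eps) as Heps.
  destruct (HC (eps / 2) ltac:(lra)) as [d1 [Hd1 Hc1]].
  destruct (derivable_pt_lim_approx _ _ _ (eps / 2) ltac:(lra) HF2) as [d2 [Hd2 Happrox]].
  assert (Hdelta : 0 < Rmin d (Rmin d1 d2)) by (repeat apply Rmin_pos; lra).
  exists (mkposreal _ Hdelta); simpl; intros u v Hu Hv.
  pose proof (Rmin_l d (Rmin d1 d2)); pose proof (Rmin_r d (Rmin d1 d2)).
  pose proof (Rmin_l d1 d2); pose proof (Rmin_r d1 d2).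
  assert (Hux : forall c, Rmin x u <= c <= Rmax x u -> Rabs (c - x) <= Rabs (u - x)).
  { intros c Hc; unfold Rmin, Rmax in Hc; destruct (Rle_dec x u); split_Rabs; lra. }
  assert (Hmove_x : Rabs ((F u v - F1 x y * u) - (F x v - F1 x y * x)) <= eps / 2 * Rabs (u - x)).
  { apply (mvt_abs_bound (fun z => F z v - F1 x y * z) (fun z => F1 z v - F1 x y)).
    - intros c Hc; pose proof (Hux c Hc).
      eapply derivable_pt_lim_eq.
      + apply derivable_pt_lim_minus'; [apply HF1; lra |].
        apply derivable_pt_lim_scal, derivable_pt_lim_id.
      + ring.
    - intros c Hc; pose proof (Hux c Hc); left; apply Hc1; lra. }
  pose proof (Happrox v ltac:(lra)) as Hmove_y.
  replace (F u v - F x y - (F1 x y * (u - x) + F2 x y * (v - y))) with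
    (((F u v - F1 x y * u) - (F x v - F1 x y * x)) + (F x v - F x y - F2 x y * (v - y)))
    by ring.
  eapply Rle_trans; [apply Rabs_triang |].
  pose proof (Rmax_l (Rabs (u - x)) (Rabs (v - y))); pose proof (Rmax_r (Rabs (u - x)) (Rabs (v - y))).
  nra.
Qed.

Definition C1_partials (f f1 f2 : R -> R -> R) : Prop :=
  forall x y, tau_pos x y ->
    derivable_pt_lim (fun z => f z y) x (f1 x y) /\
    derivable_pt_lim (fun z => f x z) y (f2 x y) /\
    cont2_at f1 x y /\ cont2_at f2 x y.

Lemma C1_partials_chain (F F1 F2 : R -> R -> R) : C1_partials F F1 F2 ->
  forall (g k : R -> R) (x g' k' : R), 0 < g x ->
    derivable_pt_lim g x g' -> derivable_pt_lim k x k' ->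
    derivable_pt_lim (fun h => F (g h) (k h)) x (F1 (g x) (k x) * g' + F2 (g x) (k x) * k').
Proof.
  intros HF g k x g' k' Hg Dg Dk.
  apply (derivable_pt_lim_comp_2d F g k x); [| exact Dg | exact Dk].
  apply differentiable_pt_lim_of_partials with (d := g x); [exact Hg | | apply HF, Hg | apply HF, Hg].
  intros u v Hu _; apply HF; unfold tau_pos; apply Rabs_def2 in Hu; lra.
Qed.

(** The Jacobian of [gflux] written in the conservative variables; [P1v], [P1t], [P1s]
    are the values of [P1] and of its two partial derivatives at [(TT 1 W, s 1 W)],
    and similarly for phase 2. *)
Definition flux_jacobian (a1 a2 P1v P2v P1t P1s P2t P2s : R) (W : nat -> R) (i j : nat) : R :=
  let al := W 0%nat in let m1 := W 1%nat in let m2 := W 2%nat in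
  let u1 := W 3%nat / m1 in let u2 := W 4%nat / m2 in
  let s1 := W 5%nat / m1 in let s2 := W 6%nat / m2 in
  let T1 := W 7%nat / m1 in let T2 := W 8%nat / m2 in
  let t1 := al / m1 in let t2 := (1 - al) / m2 in
  let pi1 := P1v + a1 ^ 2 * (T1 - t1) in let pi2 := P2v + a2 ^ 2 * (T2 - t2) in
  match i, j with
  | 1%nat, 3%nat => 1 | 2%nat, 4%nat => 1
  | 3%nat, 0%nat => pi1 - al * a1 ^ 2 / m1
  | 4%nat, 0%nat => - pi2 + (1 - al) * a2 ^ 2 / m2
  | 3%nat, 1%nat => - u1 ^ 2 - al * (P1t * T1 + P1s * s1 + a1 ^ 2 * (T1 - t1)) / m1
  | 3%nat, 3%nat => 2 * u1
  | 3%nat, 5%nat => al * P1s / m1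
  | 3%nat, 7%nat => al * (P1t + a1 ^ 2) / m1
  | 4%nat, 2%nat => - u2 ^ 2 - (1 - al) * (P2t * T2 + P2s * s2 + a2 ^ 2 * (T2 - t2)) / m2
  | 4%nat, 4%nat => 2 * u2
  | 4%nat, 6%nat => (1 - al) * P2s / m2
  | 4%nat, 8%nat => (1 - al) * (P2t + a2 ^ 2) / m2
  | 5%nat, 1%nat => - s1 * u1 | 5%nat, 3%nat => s1 | 5%nat, 5%nat => u1
  | 6%nat, 2%nat => - s2 * u2 | 6%nat, 4%nat => s2 | 6%nat, 6%nat => u2
  | 7%nat, 1%nat => - T1 * u1 | 7%nat, 3%nat => T1 | 7%nat, 7%nat => u1
  | 8%nat, 2%nat => - T2 * u2 | 8%nat, 4%nat => T2 | 8%nat, 8%nat => u2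
  | _, _ => 0
  end.

Definition system_matrix (a1 a2 : R) (P1 P2 P1t P1s P2t P2s : R -> R -> R)
    (W : nat -> R) (i j : nat) : R :=
  flux_jacobian a1 a2 (P1 (TT 1 W) (s 1 W)) (P2 (TT 2 W) (s 2 W))
    (P1t (TT 1 W) (s 1 W)) (P1s (TT 1 W) (s 1 W)) (P2t (TT 2 W) (s 2 W)) (P2s (TT 2 W) (s 2 W))
    W i j
  + dmat P1 a1 W i j.

Ltac solve_pos :=
  repeat first [ assumption | apply Rmult_lt_0_compat | apply Rinv_0_lt_compat
               | apply Rdiv_lt_0_compat ]; lra.

Lemma gflux_jacobian_eq P1 P2 P1t P1s P2t P2s a1 a2 W J :
  C1_partials P1 P1t P1s -> C1_partials P2 P2t P2s -> OmegaW W ->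
  is_jacobian (gflux P1 P2 a1 a2) W J -> forall i j, (i < 9)%nat -> (j < 9)%nat ->
  J i j = flux_jacobian a1 a2 (P1 (TT 1 W) (s 1 W)) (P2 (TT 2 W) (s 2 W))
            (P1t (TT 1 W) (s 1 W)) (P1s (TT 1 W) (s 1 W))
            (P2t (TT 2 W) (s 2 W)) (P2s (TT 2 W) (s 2 W)) W i j.
Proof.
  intros HP1 HP2 HW HJ i j Hi Hj.
  pose proof (C1_partials_chain _ _ _ HP1) as DP1; pose proof (C1_partials_chain _ _ _ HP2) as DP2.
  apply (uniqueness_limite _ 0 _ _ (HJ i j Hi Hj)).
  destruct HW as [[H0 H0'] [H1 [H2 [H7 H8]]]].
  destruct i as [|[|[|[|[|[|[|[|[|i]]]]]]]]]; try lia;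
  destruct j as [|[|[|[|[|[|[|[|[|j]]]]]]]]]; try lia.
  all: unfold gflux, flux_jacobian, pi, u, s, TT, tau, rho, arho, alpha, update;
    cbn [Nat.eqb Nat.add].
  all: eapply derivable_pt_lim_eq; [repeat derive_step |].
  all: cbv beta; cbn [INR Nat.pred]; rewrite ?Rplus_0_r.
  all: try (apply Rgt_not_eq; solve_pos).
  all: try solve_pos.
  all: try (field; repeat split; apply Rgt_not_eq; solve_pos).
Qed.

Lemma sumR_ext n f g : (forall i, (i < n)%nat -> f i = g i) -> sumR n f = sumR n g.
Proof. induction n; intros H; simpl; [reflexivity |]. rewrite IHn, H; auto. Qed.

Lemma det_succ n M :
  det (S n) M = sumR (S n) (fun j => (-1) ^ j * M O j * det n (minor j M)).
Proof. reflexivity. Qed.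

Lemma det_ext n : forall M M', (forall i j, (i < n)%nat -> (j < n)%nat -> M i j = M' i j) ->
  det n M = det n M'.
Proof.
  induction n as [| n IH]; intros M M' H; [reflexivity |]. rewrite !det_succ.
  apply sumR_ext; intros j Hj. rewrite H by lia. f_equal.
  apply IH; intros i k Hi Hk; unfold minor; apply H; [lia |].
  destruct (Nat.ltb k j); lia.
Qed.

Definition system_pattern (x c0 b30 b40 b31 b33 b35 b37 b42 b44 b46 b48 b51 b53 b55
    b62 b64 b66 b71 b73 b77 b82 b84 b88 : R) (i j : nat) : R :=
  match i, j with
  | 0%nat, 0%nat => x - c0
  | 1%nat, 1%nat => x | 1%nat, 3%nat => -1
  | 2%nat, 2%nat => x | 2%nat, 4%nat => -1
  | 3%nat, 0%nat => - b30 | 3%nat, 1%nat => - b31 | 3%nat, 3%nat => x - b33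
  | 3%nat, 5%nat => - b35 | 3%nat, 7%nat => - b37
  | 4%nat, 0%nat => - b40 | 4%nat, 2%nat => - b42 | 4%nat, 4%nat => x - b44
  | 4%nat, 6%nat => - b46 | 4%nat, 8%nat => - b48
  | 5%nat, 1%nat => - b51 | 5%nat, 3%nat => - b53 | 5%nat, 5%nat => x - b55
  | 6%nat, 2%nat => - b62 | 6%nat, 4%nat => - b64 | 6%nat, 6%nat => x - b66
  | 7%nat, 1%nat => - b71 | 7%nat, 3%nat => - b73 | 7%nat, 7%nat => x - b77
  | 8%nat, 2%nat => - b82 | 8%nat, 4%nat => - b84 | 8%nat, 8%nat => x - b88
  | _, _ => 0
  end.

Definition phase_block (x b1 b3 b5 b7 c1 c3 c5 d1 d3 d7 : R) (i j : nat) : R :=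
  match i, j with
  | 0%nat, 0%nat => x | 0%nat, 1%nat => -1
  | 1%nat, 0%nat => - b1 | 1%nat, 1%nat => x - b3 | 1%nat, 2%nat => - b5 | 1%nat, 3%nat => - b7
  | 2%nat, 0%nat => - c1 | 2%nat, 1%nat => - c3 | 2%nat, 2%nat => x - c5
  | 3%nat, 0%nat => - d1 | 3%nat, 1%nat => - d3 | 3%nat, 3%nat => x - d7
  | _, _ => 0
  end.

Ltac eval_minors M :=
  repeat match goal with |- context [minor ?a ?N ?i ?j] =>
    let v := eval cbv [M system_pattern phase_block minor Nat.ltb Nat.leb] in (minor a N i j) in
    change (minor a N i j) with v end.

Ltac expand_first_row M k :=
  rewrite ?(det_succ k); cbn [sumR]; eval_minors M;
  rewrite ?Rmult_0_r, ?Rmult_0_l, ?Rplus_0_l, ?Rplus_0_r.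

Lemma det_system_pattern x c0 b30 b40 b31 b33 b35 b37 b42 b44 b46 b48 b51 b53 b55
    b62 b64 b66 b71 b73 b77 b82 b84 b88 :
  det 9 (system_pattern x c0 b30 b40 b31 b33 b35 b37 b42 b44 b46 b48 b51 b53 b55
           b62 b64 b66 b71 b73 b77 b82 b84 b88)
  = (x - c0) * det 4 (phase_block x b31 b33 b35 b37 b51 b53 b55 b71 b73 b77)
             * det 4 (phase_block x b42 b44 b46 b48 b62 b64 b66 b82 b84 b88).
Proof.
  set (M := system_pattern x c0 b30 b40 b31 b33 b35 b37 b42 b44 b46 b48 b51 b53 b55
              b62 b64 b66 b71 b73 b77 b82 b84 b88).
  rewrite (det_succ 8); cbn [sumR]; change (M 0%nat 0%nat) with (x - c0);
    repeat match goal with |- context [M 0%nat ?j] => change (M 0%nat j) with 0 end;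
    rewrite ?Rmult_0_r, ?Rmult_0_l, ?Rplus_0_l, ?Rplus_0_r.
  expand_first_row M 7%nat. expand_first_row M 6%nat. expand_first_row M 5%nat.
  expand_first_row M 4%nat. expand_first_row M 3%nat. expand_first_row M 2%nat.
  expand_first_row M 1%nat. expand_first_row M 0%nat.
  cbv [det sumR phase_block minor Nat.ltb Nat.leb]. ring.
Qed.

Lemma det_phase_block x a al m q sg th Pt Ps : al <> 0 -> m <> 0 ->
  det 4 (phase_block x
     (- (q / m) ^ 2 - al * (Pt * (th / m) + Ps * (sg / m) + a ^ 2 * (th / m - al / m)) / m)
     (2 * (q / m)) (al * Ps / m) (al * (Pt + a ^ 2) / m)
     (- (sg / m) * (q / m)) (sg / m) (q / m)
     (- (th / m) * (q / m)) (th / m) (q / m))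
  = (x - q / m) ^ 2 * (x - (q / m + a * / (m / al))) * (x - (q / m - a * / (m / al))).
Proof.
  intros Hal Hm. cbv [det sumR minor phase_block Nat.ltb Nat.leb]. field. split; assumption.
Qed.

Lemma det_system_matrix P1 P2 P1t P1s P2t P2s a1 a2 W (x : R) :
  OmegaW W ->
  det 9 (fun i j => (if Nat.eqb i j then x else 0)
                    - system_matrix a1 a2 P1 P2 P1t P1s P2t P2s W i j) =
  (x - u 2 W) ^ 3 * (x - u 1 W) ^ 2
  * (x - (u 1 W + a1 * tau 1 W)) * (x - (u 1 W - a1 * tau 1 W))
  * (x - (u 2 W + a2 * tau 2 W)) * (x - (u 2 W - a2 * tau 2 W)).
Proof.
  intros [[H0 H0'] [H1 [H2 _]]].
  set (A := system_matrix a1 a2 P1 P2 P1t P1s P2t P2s W).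
  rewrite (det_ext 9 _ (system_pattern x (u 2 W) (A 3%nat 0%nat) (A 4%nat 0%nat)
     (A 3%nat 1%nat) (A 3%nat 3%nat) (A 3%nat 5%nat) (A 3%nat 7%nat)
     (A 4%nat 2%nat) (A 4%nat 4%nat) (A 4%nat 6%nat) (A 4%nat 8%nat)
     (A 5%nat 1%nat) (A 5%nat 3%nat) (A 5%nat 5%nat) (A 6%nat 2%nat) (A 6%nat 4%nat)
     (A 6%nat 6%nat) (A 7%nat 1%nat) (A 7%nat 3%nat) (A 7%nat 7%nat) (A 8%nat 2%nat)
     (A 8%nat 4%nat) (A 8%nat 8%nat))).
  2:{ intros i j Hi Hj; unfold A, system_matrix.
      destruct i as [|[|[|[|[|[|[|[|[|i]]]]]]]]]; try lia;
      destruct j as [|[|[|[|[|[|[|[|[|j]]]]]]]]]; try lia;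
      cbv [flux_jacobian dmat system_pattern Nat.eqb]; ring. }
  rewrite det_system_pattern; unfold A, system_matrix.
  cbv [flux_jacobian dmat Nat.eqb]; rewrite !Rplus_0_r.
  rewrite (det_phase_block x a1 (W 0%nat) (W 1%nat)) by lra.
  rewrite (det_phase_block x a2 (1 - W 0%nat) (W 2%nat)) by lra.
  unfold u, tau, rho, arho, alpha; cbn [Nat.eqb Nat.add]. ring.
Qed.

Lemma derivable_u_along k W r : W k <> 0 ->
  derivable_pt_lim (fun h => u k (fun i => W i + h * r i)) 0
    ((r (k + 2)%nat - u k W * r k) / W k).
Proof.
  intros Hk; unfold u, arho.
  eapply derivable_pt_lim_eq; [repeat derive_step |]; rewrite ?Rmult_0_l, ?Rplus_0_r;
    [exact Hk | field; exact Hk].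
Qed.

Lemma derivable_tau_along k W r : alpha k W <> 0 -> W k <> 0 ->
  derivable_pt_lim (fun h => tau k (fun i => W i + h * r i)) 0
    ((dalpha k (r 0%nat) - tau k W * r k) / W k).
Proof.
  intros Ha Hk; unfold tau, rho, arho, dalpha; unfold alpha in *.
  destruct (Nat.eqb k 1);
    (eapply derivable_pt_lim_eq; [repeat derive_step |]; rewrite ?Rmult_0_l, ?Rplus_0_r);
    try (field; split; assumption); try assumption;
    unfold Rdiv; apply Rmult_integral_contrapositive; split; auto with real.
Qed.

Lemma eq_0_of_multiple c e x : e = 0 -> x = c * e -> x = 0.
Proof. intros -> ->; ring. Qed.

Lemma tau_pos_of_OmegaW W k : OmegaW W -> (k = 1 \/ k = 2)%nat -> 0 < tau k W.
Proof.
  intros [[H0 H0'] [H1 [H2 _]]] [-> | ->]; unfold tau, rho, arho, alpha; cbn [Nat.eqb]; solve_pos.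
Qed.

Definition eigenpair (A : nat -> nat -> R) (mu : R) (r : nat -> R) : Prop :=
  forall i, (i < 9)%nat -> matvec A r i = mu * r i.

Section Eigenvectors.
Variables (P1 P2 P1t P1s P2t P2s : R -> R -> R) (a1 a2 : R) (W : nat -> R).
Hypothesis HW : OmegaW W.
Let A := system_matrix a1 a2 P1 P2 P1t P1s P2t P2s W.

Lemma eigenpair_transport mu r : eigenpair A mu r ->
  r 3%nat = mu * r 1%nat /\ r 4%nat = mu * r 2%nat /\ (u 2 W - mu) * r 0%nat = 0.
Proof.
  intros Hr.
  pose proof (Hr 0%nat ltac:(lia)) as E0; pose proof (Hr 1%nat ltac:(lia)) as E1;
    pose proof (Hr 2%nat ltac:(lia)) as E2.
  unfold matvec, A, system_matrix in E0, E1, E2; cbn [sumR] in E0, E1, E2.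
  cbv [flux_jacobian dmat Nat.eqb] in E0, E1, E2.
  repeat split; lra.
Qed.

Lemma eigenpair_phase1 mu r : eigenpair A mu r -> mu <> u 1 W ->
  r 5%nat = s 1 W * r 1%nat /\ r 7%nat = TT 1 W * r 1%nat /\
  (mu - u 1 W) ^ 2 * r 1%nat = a1 ^ 2 * tau 1 W * (tau 1 W * r 1%nat - r 0%nat).
Proof.
  intros Hr Hmu.
  destruct (eigenpair_transport mu r Hr) as [R3 _].
  destruct HW as [[H0 H0'] [H1 _]].
  pose proof (Hr 3%nat ltac:(lia)) as E3; pose proof (Hr 5%nat ltac:(lia)) as E5;
    pose proof (Hr 7%nat ltac:(lia)) as E7.
  unfold matvec, A, system_matrix in E3, E5, E7; cbn [sumR] in E3, E5, E7.
  cbv [flux_jacobian dmat Nat.eqb] in E3, E5, E7.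
  unfold pi, u, s, TT, tau, rho, arho, alpha in *; cbn [Nat.eqb Nat.add] in *.
  assert (Hd : mu - W 3%nat / W 1%nat <> 0) by lra.
  assert (R5 : r 5%nat = W 5%nat / W 1%nat * r 1%nat).
  { apply (Rmult_eq_reg_l (mu - W 3%nat / W 1%nat)); [| exact Hd].
    rewrite R3 in E5; lra. }
  assert (R7 : r 7%nat = W 7%nat / W 1%nat * r 1%nat).
  { apply (Rmult_eq_reg_l (mu - W 3%nat / W 1%nat)); [| exact Hd].
    rewrite R3 in E7; lra. }
  repeat split; [exact R5 | exact R7 |].
  rewrite R3, R5, R7 in E3.
  replace (/ (W 1%nat / W 0%nat)) with (W 0%nat / W 1%nat) by (field; lra).
  match type of E3 with ?L = ?Rhs =>
    transitivity ((mu - W 3%nat / W 1%nat) ^ 2 * r 1%nat + (L - Rhs)) end.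
  - rewrite E3; ring.
  - field; lra.
Qed.

Hypotheses (Ha1 : 0 < a1) (Ha2 : 0 < a2).

Lemma eigenpair_acoustic1_r0 mu r : eigenpair A mu r ->
  (mu - u 1 W) ^ 2 = (a1 * tau 1 W) ^ 2 -> r 0%nat = 0.
Proof.
  intros Hr Hmu.
  pose proof (tau_pos_of_OmegaW W 1 HW ltac:(lia)) as Ht.
  assert (Hne : mu <> u 1 W).
  { intros ->. rewrite Rminus_diag, pow_i in Hmu by lia.
    assert (0 < (a1 * tau 1 W) ^ 2) by (apply pow_lt; solve_pos). lra. }
  destruct (eigenpair_phase1 mu r Hr Hne) as [_ [_ Hac]].
  rewrite Hmu in Hac.
  apply (Rmult_eq_reg_l (a1 ^ 2 * tau 1 W)); [| apply Rgt_not_eq; solve_pos].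
  replace (a1 ^ 2 * tau 1 W * r 0%nat) with
    (a1 ^ 2 * tau 1 W * (tau 1 W * r 1%nat) - a1 ^ 2 * tau 1 W * (tau 1 W * r 1%nat - r 0%nat))
    by ring.
  rewrite <- Hac; ring.
Qed.

Lemma system_linearly_degenerate n r : (n < 6)%nat -> eigenpair A (lamfun a1 a2 n W) r ->
  derivable_pt_lim (fun h => lamfun a1 a2 n (fun i => W i + h * r i)) 0 0.
Proof.
  intros Hn Hr.
  destruct (eigenpair_transport _ r Hr) as [R3 [R4 R0]].
  pose proof (tau_pos_of_OmegaW W 1 HW ltac:(lia)) as Ht1.
  pose proof (tau_pos_of_OmegaW W 2 HW ltac:(lia)) as Ht2.
  destruct HW as [[H0 H0'] [H1 [H2 _]]].
  assert (Hal1 : alpha 1 W <> 0) by (unfold alpha; cbn; lra).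
  assert (Hal2 : alpha 2 W <> 0) by (unfold alpha; cbn; lra).
  pose proof (derivable_u_along 1 W r ltac:(lra)) as Du1.
  pose proof (derivable_u_along 2 W r ltac:(lra)) as Du2.
  pose proof (derivable_tau_along 1 W r Hal1 ltac:(lra)) as Dt1.
  pose proof (derivable_tau_along 2 W r Hal2 ltac:(lra)) as Dt2.
  cbn [Nat.add dalpha Nat.eqb] in Du1, Du2, Dt1, Dt2.
  destruct n as [|[|[|[|[|[|n]]]]]]; try lia; cbn [lamfun] in *.
  - eapply derivable_pt_lim_eq; [exact Du2 |]. rewrite R4; field; lra.
  - eapply derivable_pt_lim_eq; [exact Du1 |]. rewrite R3; field; lra.
  - assert (Hr0 : r 0%nat = 0) by (apply (eigenpair_acoustic1_r0 _ r Hr); ring).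
    eapply derivable_pt_lim_eq; [apply derivable_pt_lim_plus';
      [exact Du1 | apply derivable_pt_lim_mult'; [apply derivable_pt_lim_const | exact Dt1]] |].
    rewrite R3, Hr0; field; lra.
  - assert (Hr0 : r 0%nat = 0) by (apply (eigenpair_acoustic1_r0 _ r Hr); ring).
    eapply derivable_pt_lim_eq; [apply derivable_pt_lim_minus';
      [exact Du1 | apply derivable_pt_lim_mult'; [apply derivable_pt_lim_const | exact Dt1]] |].
    rewrite R3, Hr0; field; lra.
  - assert (Hr0 : r 0%nat = 0).
    { assert (0 < a2 * tau 2 W) by solve_pos.
      apply (Rmult_eq_reg_l (- (a2 * tau 2 W))); [rewrite Rmult_0_r, <- R0; ring | lra]. }
    eapply derivable_pt_lim_eq; [apply derivable_pt_lim_plus';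
      [exact Du2 | apply derivable_pt_lim_mult'; [apply derivable_pt_lim_const | exact Dt2]] |].
    rewrite R4, Hr0; field; lra.
  - assert (Hr0 : r 0%nat = 0).
    { assert (0 < a2 * tau 2 W) by solve_pos.
      apply (Rmult_eq_reg_l (a2 * tau 2 W)); [rewrite Rmult_0_r, <- R0; ring | lra]. }
    eapply derivable_pt_lim_eq; [apply derivable_pt_lim_minus';
      [exact Du2 | apply derivable_pt_lim_mult'; [apply derivable_pt_lim_const | exact Dt2]] |].
    rewrite R4, Hr0; field; lra.
Qed.

Lemma eigenpair_resonance_r0 mu r : eigenpair A mu r ->
  (u 1 W - u 2 W) ^ 2 = (a1 * tau 1 W) ^ 2 -> r 0%nat = 0.
Proof.
  intros Hr Hres.
  destruct (eigenpair_transport mu r Hr) as [_ [_ R0]].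
  destruct (Req_dec mu (u 2 W)) as [-> | Hmu].
  - apply (eigenpair_acoustic1_r0 _ r Hr). rewrite <- Hres; ring.
  - apply (eq_0_of_multiple (/ (u 2 W - mu)) _ _ R0); field; lra.
Qed.

End Eigenvectors.

(** The differential of the change of variables from the primitive variables
    [(alpha1, tau1, u1, s1, T1, tau2, u2, s2, T2)] to [W], where
    [alpha_k rho_k = alpha_k / tau_k]. *)
Definition to_conservative (W p : nat -> R) (i : nat) : R :=
  let al := W 0%nat in let m1 := W 1%nat in let m2 := W 2%nat in
  let t1 := al / m1 in let t2 := (1 - al) / m2 in
  let dm1 := p 0%nat / t1 - al * p 1%nat / t1 ^ 2 in
  let dm2 := - p 0%nat / t2 - (1 - al) * p 5%nat / t2 ^ 2 in
  match i with
  | 0%nat => p 0%nat | 1%nat => dm1 | 2%nat => dm2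
  | 3%nat => W 3%nat / m1 * dm1 + m1 * p 2%nat | 4%nat => W 4%nat / m2 * dm2 + m2 * p 6%nat
  | 5%nat => W 5%nat / m1 * dm1 + m1 * p 3%nat | 6%nat => W 6%nat / m2 * dm2 + m2 * p 7%nat
  | 7%nat => W 7%nat / m1 * dm1 + m1 * p 4%nat | _ => W 8%nat / m2 * dm2 + m2 * p 8%nat
  end.

(** Right eigenvectors in the primitive variables of [to_conservative], for the
    eigenvalues [system_eigval]; [P1t], ..., [P2s] are the partial derivatives of the
    pressure laws at the state.  Only the first one, which carries the jump of the
    volume fraction, involves [D = (u1 - u2)^2 - (a1 tau1)^2]; at resonance it is a
    junk value (division by zero), not an eigenvector. *)
Definition prim_eigvec (a1 a2 P1t P1s P2t P2s pi1 pi2 : R) (W : nat -> R) (k : nat) : list R :=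
  let al := W 0%nat in let m1 := W 1%nat in
  let t1 := al / m1 in
  let v := W 3%nat / m1 - W 4%nat / W 2%nat in let D := v ^ 2 - a1 ^ 2 * t1 ^ 2 in
  match k with
  | 0%nat => [1; v ^ 2 * t1 / (al * D); v * a1 ^ 2 * t1 ^ 2 / (al * D); 0; 0;
              (pi1 - pi2) / ((1 - al) * a2 ^ 2); 0; 0; 0]
  | 1%nat => [0; P1s / a1 ^ 2; 0; 1; 0; 0; 0; 0; 0]
  | 2%nat => [0; (P1t + a1 ^ 2) / a1 ^ 2; 0; 0; 1; 0; 0; 0; 0]
  | 3%nat => [0; 1; - a1; 0; 0; 0; 0; 0; 0]
  | 4%nat => [0; 1; a1; 0; 0; 0; 0; 0; 0]
  | 5%nat => [0; 0; 0; 0; 0; P2s / a2 ^ 2; 0; 1; 0]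
  | 6%nat => [0; 0; 0; 0; 0; (P2t + a2 ^ 2) / a2 ^ 2; 0; 0; 1]
  | 7%nat => [0; 0; 0; 0; 0; 1; - a2; 0; 0]
  | _ => [0; 0; 0; 0; 0; 1; a2; 0; 0]
  end.

Definition system_eigval (a1 a2 : R) (W : nat -> R) (k : nat) : R :=
  match k with
  | 0%nat => u 2 W | 1%nat => u 1 W | 2%nat => u 1 W
  | 3%nat => u 1 W + a1 * tau 1 W | 4%nat => u 1 W - a1 * tau 1 W
  | 5%nat => u 2 W | 6%nat => u 2 W
  | 7%nat => u 2 W + a2 * tau 2 W | _ => u 2 W - a2 * tau 2 W
  end.

Lemma to_conservative_lincomb W (p : nat -> nat -> R) (c : nat -> R) i :
  sumR 9 (fun k => c k * to_conservative W (p k) i)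
  = to_conservative W (fun j => sumR 9 (fun k => c k * p k j)) i.
Proof.
  destruct i as [|[|[|[|[|[|[|[|i]]]]]]]]; cbv [sumR to_conservative]; unfold Rdiv; ring.
Qed.

Lemma to_conservative_injective W p : OmegaW W ->
  (forall i, (i < 9)%nat -> to_conservative W p i = 0) -> forall j, (j < 9)%nat -> p j = 0.
Proof.
  intros [[H0 H0'] [H1 [H2 _]]] Hp.
  pose proof (Hp 0%nat ltac:(lia)) as E0; pose proof (Hp 1%nat ltac:(lia)) as E1;
    pose proof (Hp 2%nat ltac:(lia)) as E2; pose proof (Hp 3%nat ltac:(lia)) as E3;
    pose proof (Hp 4%nat ltac:(lia)) as E4; pose proof (Hp 5%nat ltac:(lia)) as E5;
    pose proof (Hp 6%nat ltac:(lia)) as E6; pose proof (Hp 7%nat ltac:(lia)) as E7;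
    pose proof (Hp 8%nat ltac:(lia)) as E8.
  cbv [to_conservative] in E0, E1, E2, E3, E4, E5, E6, E7, E8.
  rewrite E1 in E3, E5, E7; rewrite E2 in E4, E6, E8; rewrite E0 in E1, E2.
  assert (p 1%nat = 0) by (apply (eq_0_of_multiple (- W 0%nat / W 1%nat ^ 2) _ _ E1); field; lra).
  assert (p 5%nat = 0)
    by (apply (eq_0_of_multiple (- (1 - W 0%nat) / W 2%nat ^ 2) _ _ E2); field; lra).
  assert (p 2%nat = 0) by (apply (eq_0_of_multiple (/ W 1%nat) _ _ E3); field; lra).
  assert (p 3%nat = 0) by (apply (eq_0_of_multiple (/ W 1%nat) _ _ E5); field; lra).
  assert (p 4%nat = 0) by (apply (eq_0_of_multiple (/ W 1%nat) _ _ E7); field; lra).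
  assert (p 6%nat = 0) by (apply (eq_0_of_multiple (/ W 2%nat) _ _ E4); field; lra).
  assert (p 7%nat = 0) by (apply (eq_0_of_multiple (/ W 2%nat) _ _ E6); field; lra).
  assert (p 8%nat = 0) by (apply (eq_0_of_multiple (/ W 2%nat) _ _ E8); field; lra).
  intros j Hj; destruct j as [|[|[|[|[|[|[|[|[|j]]]]]]]]]; auto; lia.
Qed.

Lemma prim_eigvec_independent a1 a2 P1t P1s P2t P2s pi1 pi2 W (c : nat -> R) :
  0 < a1 -> 0 < a2 ->
  (forall j, (j < 9)%nat ->
     sumR 9 (fun k => c k * nth j (prim_eigvec a1 a2 P1t P1s P2t P2s pi1 pi2 W k) 0) = 0) ->
  forall k, (k < 9)%nat -> c k = 0.
Proof.
  intros Ha1 Ha2 Hc.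
  pose proof (Hc 0%nat ltac:(lia)) as E0; pose proof (Hc 1%nat ltac:(lia)) as E1;
    pose proof (Hc 2%nat ltac:(lia)) as E2; pose proof (Hc 3%nat ltac:(lia)) as E3;
    pose proof (Hc 4%nat ltac:(lia)) as E4; pose proof (Hc 5%nat ltac:(lia)) as E5;
    pose proof (Hc 6%nat ltac:(lia)) as E6; pose proof (Hc 7%nat ltac:(lia)) as E7;
    pose proof (Hc 8%nat ltac:(lia)) as E8.
  cbv [sumR nth prim_eigvec] in E0, E1, E2, E3, E4, E5, E6, E7, E8.
  assert (C0 : c 0%nat = 0) by lra.
  assert (C1 : c 1%nat = 0) by lra. assert (C2 : c 2%nat = 0) by lra.
  assert (C5 : c 5%nat = 0) by lra. assert (C6 : c 6%nat = 0) by lra.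
  rewrite C0, C1, C2 in E1, E2; rewrite C0, C5, C6 in E5, E6.
  rewrite ?Rmult_0_l, ?Rplus_0_l, ?Rplus_0_r in E1, E2, E5, E6.
  assert (C4 : c 4%nat = c 3%nat).
  { apply Rminus_diag_uniq, (eq_0_of_multiple (/ a1) _ _ E2); field; lra. }
  assert (C8 : c 8%nat = c 7%nat).
  { apply Rminus_diag_uniq, (eq_0_of_multiple (/ a2) _ _ E6); field; lra. }
  rewrite C4 in E1; rewrite C8 in E5.
  assert (C3 : c 3%nat = 0) by lra. assert (C7 : c 7%nat = 0) by lra.
  intros k Hk; destruct k as [|[|[|[|[|[|[|[|[|k]]]]]]]]]; lra || lia.
Qed.

Definition system_eigvec (a1 a2 : R) (P1 P2 P1t P1s P2t P2s : R -> R -> R) (W : nat -> R)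
    (k i : nat) : R :=
  to_conservative W (fun j => nth j (prim_eigvec a1 a2
    (P1t (TT 1 W) (s 1 W)) (P1s (TT 1 W) (s 1 W)) (P2t (TT 2 W) (s 2 W)) (P2s (TT 2 W) (s 2 W))
    (pi P1 a1 1 W) (pi P2 a2 2 W) W k) 0) i.

Lemma system_eigvec_eigenpair P1 P2 P1t P1s P2t P2s a1 a2 W k :
  0 < a1 -> 0 < a2 -> OmegaW W -> (u 1 W - u 2 W) ^ 2 <> (a1 * tau 1 W) ^ 2 -> (k < 9)%nat ->
  eigenpair (system_matrix a1 a2 P1 P2 P1t P1s P2t P2s W) (system_eigval a1 a2 W k)
    (system_eigvec a1 a2 P1 P2 P1t P1s P2t P2s W k).
Proof.
  intros Ha1 Ha2 [[H0 H0'] [H1 [H2 _]]] HD Hk i Hi.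
  unfold u, tau, rho, arho, alpha in HD; cbn [Nat.eqb Nat.add] in HD.
  assert (HD1 : (W 3%nat / W 1%nat - W 4%nat / W 2%nat) ^ 2 - a1 ^ 2 * (W 0%nat / W 1%nat) ^ 2 <> 0).
  { intros E; apply HD. replace (/ (W 1%nat / W 0%nat)) with (W 0%nat / W 1%nat) by (field; lra).
    lra. }
  assert (HD2 : (W 3%nat * W 2%nat - W 4%nat * W 1%nat) ^ 2 - (a1 * W 0%nat * W 2%nat) ^ 2 <> 0).
  { intros E; apply HD1.
    replace ((W 3%nat / W 1%nat - W 4%nat / W 2%nat) ^ 2 - a1 ^ 2 * (W 0%nat / W 1%nat) ^ 2) with
      (((W 3%nat * W 2%nat - W 4%nat * W 1%nat) ^ 2 - (a1 * W 0%nat * W 2%nat) ^ 2)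
       / (W 1%nat * W 2%nat) ^ 2) by (field; lra).
    rewrite E; field; lra. }
  clear HD.
  unfold matvec, system_matrix, system_eigvec.
  destruct k as [|[|[|[|[|[|[|[|[|k]]]]]]]]]; try lia;
  destruct i as [|[|[|[|[|[|[|[|[|i]]]]]]]]]; try lia.
  all: cbv [sumR flux_jacobian dmat to_conservative prim_eigvec nth system_eigval Nat.eqb].
  all: unfold pi, u, s, TT, tau, rho, arho, alpha; cbn [Nat.eqb Nat.add].
  all: field; repeat split; lra.
Qed.

Ltac side_pos := cbv beta; first [apply Rgt_not_eq; solve_pos | solve_pos].

(** Equates the derivative recorded in [G] with its symbolic value; [G] is reverted
    first so that [derive_step] cannot use it. *)
Tactic Notation "identify_derivative" hyp(G) "as" ident(E) :=
  match type of G with derivable_pt_lim ?F ?x0 ?L =>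
    let K := fresh "K" in
    revert G; eassert (K : derivable_pt_lim F x0 _) by (repeat derive_step; side_pos); intro G;
    pose proof (uniqueness_limite _ _ _ _ G K) as E; clear K G
  end.

Tactic Notation "solve_for" hyp(E) "as" ident(A) :=
  match type of E with
  | - ?a + ?S = ?G => assert (A : a = S - G) by lra
  | - ?a = ?G => assert (A : a = - G) by lra
  end.

Section PhaseEnergy.
Variables (e P eT es Pt Ps : R -> R -> R) (a uI piI : R).
Hypotheses (Ha : 0 < a) (He : C1_partials e eT es) (HP : C1_partials P Pt Ps).

(** A one-phase energy balance with interfacial velocity [uI] and pressure [piI]; the
    defect [(uI - u) (pi - piI) d_x alpha] vanishes for phase 1 because [piI = pi1], and
    for phase 2 because [uI = u2]. *)
Lemma phase1_energy_balance (V : R -> R -> nat -> R) (Vt Vx : nat -> R) t x :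
  (forall i, (i < 9)%nat -> derivable_pt_lim (fun t' => V t' x i) t (Vt i)) ->
  (forall i, (i < 9)%nat -> derivable_pt_lim (fun x' => V t x' i) x (Vx i)) ->
  0 < V t x 0%nat -> 0 < V t x 1%nat -> 0 < V t x 7%nat ->
  Vt 0%nat = - uI * Vx 0%nat ->
  derivable_pt_lim (fun x' => gflux P P a a (V t x') 1) x (- Vt 1%nat) ->
  derivable_pt_lim (fun x' => gflux P P a a (V t x') 3) x (- Vt 3%nat + piI * Vx 0%nat) ->
  derivable_pt_lim (fun x' => gflux P P a a (V t x') 5) x (- Vt 5%nat) ->
  derivable_pt_lim (fun x' => gflux P P a a (V t x') 7) x (- Vt 7%nat) ->
  exists Dt Dx,
    derivable_pt_lim (fun t' => eta e P a 1 (V t' x)) t Dt /\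
    derivable_pt_lim (fun x' => eflux e P a 1 (V t x')) x Dx /\
    Dt + Dx - uI * piI * Vx 0%nat = (uI - u 1 (V t x)) * (pi P a 1 (V t x) - piI) * Vx 0%nat.
Proof.
  intros HT HX H0 H1 H7 G0 G1 G3 G5 G7.
  pose proof (C1_partials_chain _ _ _ He) as De; pose proof (C1_partials_chain _ _ _ HP) as DP.
  assert (T0 := HT 0%nat ltac:(lia)); assert (T1 := HT 1%nat ltac:(lia));
  assert (T3 := HT 3%nat ltac:(lia)); assert (T5 := HT 5%nat ltac:(lia));
  assert (T7 := HT 7%nat ltac:(lia)).
  assert (X0 := HX 0%nat ltac:(lia)); assert (X1 := HX 1%nat ltac:(lia));
  assert (X3 := HX 3%nat ltac:(lia)); assert (X5 := HX 5%nat ltac:(lia));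
  assert (X7 := HX 7%nat ltac:(lia)).
  clear HT HX.
  unfold gflux, pi, u, s, TT, tau, rho, arho, alpha in G1, G3, G5, G7;
    cbn [Nat.eqb Nat.add] in G1, G3, G5, G7.
  identify_derivative G1 as E1. identify_derivative G3 as E3.
  identify_derivative G5 as E5. identify_derivative G7 as E7.
  cbn [INR Nat.pred] in E1, E3, E5, E7.
  solve_for E1 as A1. solve_for E3 as A3. solve_for E5 as A5. solve_for E7 as A7. clear E1 E3 E5 E7.
  unfold eta, eflux, Energy, pi, u, s, TT, tau, rho, arho, alpha; cbn [Nat.eqb Nat.add].
  eexists; eexists; split; [repeat derive_step; side_pos | split; [repeat derive_step; side_pos |]].
  cbn [INR Nat.pred]. rewrite G0, A1, A3, A5, A7.
  field; repeat split; lra.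
Qed.

End PhaseEnergy.

(** Exchange of the two phases.  [c] is the value of [alpha1 + alpha2]: [c = 1] on
    states and [c = 0] on their derivatives. *)
Definition swap_phases (c : R) (W : nat -> R) (i : nat) : R :=
  match i with
  | 0%nat => c - W 0%nat | 1%nat => W 2%nat | 2%nat => W 1%nat
  | 3%nat => W 4%nat | 4%nat => W 3%nat | 5%nat => W 6%nat | 6%nat => W 5%nat
  | 7%nat => W 8%nat | 8%nat => W 7%nat | _ => W i
  end.

Lemma derivable_swap_phases (V : R -> nat -> R) (dV : nat -> R) t0 :
  (forall i, (i < 9)%nat -> derivable_pt_lim (fun t => V t i) t0 (dV i)) ->
  forall i, (i < 9)%nat ->
    derivable_pt_lim (fun t => swap_phases 1 (V t) i) t0 (swap_phases 0 dV i).
Proof.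
  intros HV i Hi.
  destruct i as [|[|[|[|[|[|[|[|[|i]]]]]]]]]; try lia; cbn [swap_phases]; try (apply HV; lia).
  apply derivable_pt_lim_minus'; [apply derivable_pt_lim_const | apply HV; lia].
Qed.

Lemma sumR_dmat P1 a1 W Wx i :
  sumR 9 (fun j => dmat P1 a1 W i j * Wx j) = dmat P1 a1 W i 0%nat * Wx 0%nat.
Proof. cbv [sumR dmat Nat.eqb]; ring. Qed.

Section SystemEnergy.
Variables (e1 e2 P1 P2 e1t e1s e2t e2s P1t P1s P2t P2s : R -> R -> R) (a1 a2 : R).
Hypotheses (Ha1 : 0 < a1) (Ha2 : 0 < a2)
  (He1 : C1_partials e1 e1t e1s) (He2 : C1_partials e2 e2t e2s)
  (HP1 : C1_partials P1 P1t P1s) (HP2 : C1_partials P2 P2t P2s).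
Variables (W : R -> R -> nat -> R) (Wt Wx : nat -> R) (t x : R).
Hypotheses
  (HT : forall i, (i < 9)%nat -> derivable_pt_lim (fun t' => W t' x i) t (Wt i))
  (HX : forall i, (i < 9)%nat -> derivable_pt_lim (fun x' => W t x' i) x (Wx i))
  (HW : OmegaW (W t x))
  (Hsys : forall i, (i < 9)%nat ->
     derivable_pt_lim (fun x' => gflux P1 P2 a1 a2 (W t x') i) x
       (- Wt i - sumR 9 (fun j => dmat P1 a1 (W t x) i j * Wx j))).

Lemma volume_fraction_transport : Wt 0%nat = - u 2 (W t x) * Wx 0%nat.
Proof.
  pose proof (uniqueness_limite _ _ _ _ (Hsys 0%nat ltac:(lia)) (derivable_pt_lim_const 0 x)) as E.
  rewrite sumR_dmat in E; cbv [dmat Nat.eqb] in E; lra.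
Qed.

Lemma system_row i l : (i < 9)%nat -> - Wt i - dmat P1 a1 (W t x) i 0%nat * Wx 0%nat = l ->
  derivable_pt_lim (fun x' => gflux P1 P2 a1 a2 (W t x') i) x l.
Proof. intros Hi <-; rewrite <- sumR_dmat; apply Hsys, Hi. Qed.

Ltac system_row i := apply (system_row i); [lia | cbv [dmat swap_phases Nat.eqb]; ring].

Lemma phase1_energy :
  exists Dt Dx,
    derivable_pt_lim (fun t' => eta e1 P1 a1 1 (W t' x)) t Dt /\
    derivable_pt_lim (fun x' => eflux e1 P1 a1 1 (W t x')) x Dx /\
    Dt + Dx - u 2 (W t x) * pi P1 a1 1 (W t x) * dalpha 1 (Wx 0%nat) = 0.
Proof.
  destruct HW as [[H0 _] [H1 [_ [H7 _]]]].
  destruct (phase1_energy_balance e1 P1 e1t e1s P1t P1s a1 (u 2 (W t x)) (pi P1 a1 1 (W t x))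
              Ha1 He1 HP1 W Wt Wx t x HT HX H0 H1 H7 volume_fraction_transport)
    as [Dt [Dx [Dt_ok [Dx_ok Hbal]]]];
    [system_row 1%nat | system_row 3%nat | system_row 5%nat | system_row 7%nat |].
  exists Dt, Dx; split; [exact Dt_ok | split; [exact Dx_ok |]].
  cbn [dalpha Nat.eqb]; rewrite Hbal; ring.
Qed.

Lemma phase2_energy :
  exists Dt Dx,
    derivable_pt_lim (fun t' => eta e2 P2 a2 2 (W t' x)) t Dt /\
    derivable_pt_lim (fun x' => eflux e2 P2 a2 2 (W t x')) x Dx /\
    Dt + Dx - u 2 (W t x) * pi P1 a1 1 (W t x) * dalpha 2 (Wx 0%nat) = 0.
Proof.
  destruct HW as [[_ H0] [_ [H2 [_ H8]]]].
  destruct (phase1_energy_balance e2 P2 e2t e2s P2t P2s a2 (u 2 (W t x)) (pi P1 a1 1 (W t x))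
              Ha2 He2 HP2 (fun t x => swap_phases 1 (W t x)) (swap_phases 0 Wt) (swap_phases 0 Wx)
              t x (derivable_swap_phases (fun t' => W t' x) Wt t HT)
              (derivable_swap_phases (W t) Wx x HX))
    as [Dt [Dx [Dt_ok [Dx_ok Hbal]]]];
    [cbn [swap_phases]; lra .. | cbn [swap_phases]; rewrite volume_fraction_transport; ring
    | system_row 2%nat | system_row 4%nat | system_row 6%nat | system_row 8%nat |].
  exists Dt, Dx; split; [exact Dt_ok | split; [exact Dx_ok |]].
  change (u 1 (swap_phases 1 (W t x))) with (u 2 (W t x)) in Hbal.
  rewrite Rminus_diag, !Rmult_0_l in Hbal.
  cbn [dalpha Nat.eqb swap_phases] in *; rewrite <- Hbal; ring.
Qed.

Lemma system_energy_balance :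
  (exists Dt Dx,
     derivable_pt_lim (fun t' => eta e1 P1 a1 1 (W t' x)) t Dt /\
     derivable_pt_lim (fun x' => eflux e1 P1 a1 1 (W t x')) x Dx /\
     Dt + Dx - u 2 (W t x) * pi P1 a1 1 (W t x) * dalpha 1 (Wx 0%nat) = 0) /\
  (exists Dt Dx,
     derivable_pt_lim (fun t' => eta e2 P2 a2 2 (W t' x)) t Dt /\
     derivable_pt_lim (fun x' => eflux e2 P2 a2 2 (W t x')) x Dx /\
     Dt + Dx - u 2 (W t x) * pi P1 a1 1 (W t x) * dalpha 2 (Wx 0%nat) = 0) /\
  (exists Dt Dx,
     derivable_pt_lim (fun t' => eta e1 P1 a1 1 (W t' x) + eta e2 P2 a2 2 (W t' x)) t Dt /\
     derivable_pt_lim (fun x' => eflux e1 P1 a1 1 (W t x') + eflux e2 P2 a2 2 (W t x')) x Dx /\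
     Dt + Dx = 0).
Proof.
  destruct phase1_energy as [Dt1 [Dx1 [Dt1_ok [Dx1_ok Hbal1]]]].
  destruct phase2_energy as [Dt2 [Dx2 [Dt2_ok [Dx2_ok Hbal2]]]].
  split; [exists Dt1, Dx1; auto | split; [exists Dt2, Dx2; auto |]].
  exists (Dt1 + Dt2), (Dx1 + Dx2); split; [| split].
  - exact (derivable_pt_lim_plus' _ _ _ _ _ Dt1_ok Dt2_ok).
  - exact (derivable_pt_lim_plus' _ _ _ _ _ Dx1_ok Dx2_ok).
  - cbn [dalpha Nat.eqb] in Hbal1, Hbal2; lra.
Qed.

End SystemEnergy.

Module FreeFamily.
Import all_boot all_algebra Rstruct.
Import GRing.Theory.
Local Open Scope ring_scope.

Lemma sumR_big n (f : nat -> R) : sumR n f = \sum_(k < n) f k.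
Proof.
  elim: n => [|n IH] /=; first by rewrite big_ord0.
  by rewrite big_ord_recr /= IH.
Qed.

(** A free family of nine vectors of [R^9] spans it, so it cannot lie in the
    hyperplane of vectors with vanishing first coordinate. *)
Lemma hyperplane_family_not_free (r : nat -> nat -> R) :
  (forall k, lt k 9 -> r k 0%N = 0) ->
  (forall c : nat -> R, (forall i, lt i 9 -> sumR 9 (fun k => c k * r k i) = 0) ->
      forall k, lt k 9 -> c k = 0) -> False.
Proof.
  move=> Hr0 Hfree.
  pose M : 'M[R]_9 := \matrix_(k, i) r k i.
  have Mfree : row_free M.
  { apply: inj_row_free => v Hv; apply/rowP => k; rewrite mxE.
    have Hv0 : forall i, lt i 9 -> sumR 9 (fun k => v 0 (inord k) * r k i) = 0.
    { move=> i Hi; rewrite sumR_big.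
      transitivity ((v *m M) 0 (inord i)); last by rewrite Hv mxE.
      rewrite mxE; apply: eq_bigr => j _; rewrite inord_val mxE inordK //; exact/ltP. }
    by have := Hfree _ Hv0 k (elimT ltP (ltn_ord k)); rewrite inord_val. }
  have Munit : M \in unitmx by rewrite -row_free_unit.
  have Me0 : M *m (delta_mx 0 0 : 'cV[R]_9) = 0.
  { rewrite -colE; apply/colP => k; rewrite !mxE; exact: Hr0 _ (elimT ltP (ltn_ord k)). }
  have := mulKmx Munit (delta_mx 0 0 : 'cV[R]_9).
  rewrite Me0 mulmx0 => /(congr1 (fun A : 'cV[R]_9 => A 0 0)).
  by rewrite !mxE /= => /eqP; rewrite eq_sym oner_eq0.
Qed.
End FreeFamily.

Lemma eigenpair_ext A B mu r : (forall i j, (i < 9)%nat -> (j < 9)%nat -> A i j = B i j) ->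
  eigenpair A mu r -> eigenpair B mu r.
Proof.
  intros HAB Hr i Hi; rewrite <- Hr by exact Hi; unfold matvec.
  apply sumR_ext; intros j Hj; rewrite HAB; auto.
Qed.

Lemma eigenbasis_ext A B : (forall i j, (i < 9)%nat -> (j < 9)%nat -> A i j = B i j) ->
  eigenbasis A -> eigenbasis B.
Proof.
  intros HAB [r [mu [Hev Hfree]]]; exists r, mu; split; [| exact Hfree].
  intros k i Hk; revert i; apply (eigenpair_ext A B (mu k) (r k) HAB).
  intros i Hi; apply Hev; assumption.
Qed.

Lemma system_eigenbasis_iff P1 P2 P1t P1s P2t P2s a1 a2 W :
  0 < a1 -> 0 < a2 -> OmegaW W ->
  eigenbasis (system_matrix a1 a2 P1 P2 P1t P1s P2t P2s W) <->
  alpha 1 W <> 0 /\ alpha 2 W <> 0 /\ Rabs (u 1 W - u 2 W) <> a1 * tau 1 W.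
Proof.
  intros Ha1 Ha2 HW.
  assert (Hal : alpha 1 W <> 0 /\ alpha 2 W <> 0)
    by (destruct HW as [[H0 H0'] _]; unfold alpha; cbn; split; lra).
  assert (Hsound : 0 < a1 * tau 1 W) by (pose proof (tau_pos_of_OmegaW W 1 HW ltac:(lia)); solve_pos).
  split.
  - intros [r [mu [Hev Hfree]]]; split; [apply Hal | split; [apply Hal |]]; intros Hres.
    apply (FreeFamily.hyperplane_family_not_free r); [intros k Hk | exact Hfree].
    apply (eigenpair_resonance_r0 P1 P2 P1t P1s P2t P2s a1 a2 W HW Ha1 (mu k) (r k)).
    + intros i Hi; apply Hev; assumption.
    + rewrite <- pow2_abs, Hres; reflexivity.
  - intros [_ [_ Hnres]].
    exists (system_eigvec a1 a2 P1 P2 P1t P1s P2t P2s W), (system_eigval a1 a2 W); split.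
    + intros k i Hk Hi; apply system_eigvec_eigenpair; auto.
      intros Hres; apply Hnres.
      rewrite <- (Rabs_pos_eq (a1 * tau 1 W)) by lra.
      apply Rsqr_eq_abs_0; rewrite !Rsqr_pow2; exact Hres.
    + intros c Hc; unfold system_eigvec in Hc.
      setoid_rewrite to_conservative_lincomb in Hc.
      eapply prim_eigvec_independent; [exact Ha1 | exact Ha2 |].
      exact (to_conservative_injective W _ HW Hc).
Qed.
Theorem proposition3p3
  (e1 e2 P1 P2 : R -> R -> R) (a1 a2 : R)
  (ha1 : 0 < a1) (ha2 : 0 < a2)
  (he1 : C1_on tau_pos e1) (he2 : C1_on tau_pos e2)
  (hP1 : C1_on tau_pos P1) (hP2 : C1_on tau_pos P2)
  (hPe1 : forall t s0, 0 < t -> derivable_pt_lim (fun z => e1 z s0) t (- P1 t s0))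
  (hPe2 : forall t s0, 0 < t -> derivable_pt_lim (fun z => e2 z s0) t (- P2 t s0)) :
  (forall (W : nat -> R) (J : nat -> nat -> R),
     OmegaW W ->
     is_jacobian (gflux P1 P2 a1 a2) W J ->
     let A := fun i j => J i j + dmat P1 a1 W i j in
     (forall x : R,
        det 9 (fun i j => (if Nat.eqb i j then x else 0) - A i j) =
        (x - u 2 W) ^ 3 * (x - u 1 W) ^ 2
        * (x - (u 1 W + a1 * tau 1 W)) * (x - (u 1 W - a1 * tau 1 W))
        * (x - (u 2 W + a2 * tau 2 W)) * (x - (u 2 W - a2 * tau 2 W))) /\
     (forall (n : nat) (r : nat -> R), (n < 6)%nat ->
        (forall i, (i < 9)%nat -> matvec A r i = lamfun a1 a2 n W * r i) ->
        derivable_pt_lim (fun h => lamfun a1 a2 n (fun i => W i + h * r i)) 0 0) /\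
     (eigenbasis A <->
        (alpha 1 W <> 0 /\ alpha 2 W <> 0 /\ Rabs (u 1 W - u 2 W) <> a1 * tau 1 W)))
  /\
  (forall (U : R -> R -> Prop) (W : R -> R -> nat -> R) (Wt Wx : R -> R -> nat -> R),
     open2 U ->
     (forall i t x, (i < 9)%nat -> U t x ->
        derivable_pt_lim (fun t' => W t' x i) t (Wt t x i) /\
        derivable_pt_lim (fun x' => W t x' i) x (Wx t x i) /\
        cont2_at (fun t0 x0 => Wt t0 x0 i) t x /\
        cont2_at (fun t0 x0 => Wx t0 x0 i) t x) ->
     (forall t x, U t x -> OmegaW (W t x)) ->
     (forall i t x, (i < 9)%nat -> U t x ->
        derivable_pt_lim (fun x' => gflux P1 P2 a1 a2 (W t x') i) x
          (- Wt t x i - sumR 9 (fun j => dmat P1 a1 (W t x) i j * Wx t x j))) ->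
     forall t x, U t x ->
       (exists Dt Dx,
          derivable_pt_lim (fun t' => eta e1 P1 a1 1 (W t' x)) t Dt /\
          derivable_pt_lim (fun x' => eflux e1 P1 a1 1 (W t x')) x Dx /\
          Dt + Dx - u 2 (W t x) * pi P1 a1 1 (W t x) * dalpha 1 (Wx t x 0%nat) = 0) /\
       (exists Dt Dx,
          derivable_pt_lim (fun t' => eta e2 P2 a2 2 (W t' x)) t Dt /\
          derivable_pt_lim (fun x' => eflux e2 P2 a2 2 (W t x')) x Dx /\
          Dt + Dx - u 2 (W t x) * pi P1 a1 1 (W t x) * dalpha 2 (Wx t x 0%nat) = 0) /\
       (exists Dt Dx,
          derivable_pt_lim (fun t' => eta e1 P1 a1 1 (W t' x) + eta e2 P2 a2 2 (W t' x)) t Dt /\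
          derivable_pt_lim (fun x' => eflux e1 P1 a1 1 (W t x') + eflux e2 P2 a2 2 (W t x')) x Dx /\
          Dt + Dx = 0)).
Proof.
  destruct hP1 as [P1t [P1s HP1]], hP2 as [P2t [P2s HP2]].
  destruct he1 as [e1t [e1s He1]], he2 as [e2t [e2s He2]].
  split.
  - intros W J HW HJ A.
    assert (HA : forall i j, (i < 9)%nat -> (j < 9)%nat ->
                   A i j = system_matrix a1 a2 P1 P2 P1t P1s P2t P2s W i j).
    { intros i j Hi Hj; unfold A, system_matrix.
      rewrite (gflux_jacobian_eq P1 P2 P1t P1s P2t P2s a1 a2 W J HP1 HP2 HW HJ) by assumption.
      reflexivity. }
    split; [| split].
    + intros x; rewrite <- (det_system_matrix P1 P2 P1t P1s P2t P2s a1 a2 W x HW).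
      apply det_ext; intros i j Hi Hj; rewrite HA; auto.
    + intros n r Hn Hr.
      apply (system_linearly_degenerate P1 P2 P1t P1s P2t P2s a1 a2 W HW ha1 ha2 n r Hn).
      exact (eigenpair_ext A _ _ r HA Hr).
    + rewrite <- (system_eigenbasis_iff P1 P2 P1t P1s P2t P2s a1 a2 W ha1 ha2 HW).
      split; apply eigenbasis_ext; intros i j Hi Hj; rewrite HA; auto.
  - intros U W Wt Wx _ HC HOm HPDE t x Htx.
    apply (system_energy_balance e1 e2 P1 P2 e1t e1s e2t e2s P1t P1s P2t P2s a1 a2
             ha1 ha2 He1 He2 HP1 HP2 W (Wt t x) (Wx t x) t x);
      [intros i Hi; apply (HC i t x Hi Htx) .. | apply HOm, Htx | intros i Hi; apply HPDE; assumption].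
Qed.
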